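(* Fix $\alpha\in(0,\tfrac12)$ and run Algorithm 2 (described in the context) with parameter $\alpha$ on any instance of dynamic bin packing. Then at every time $t$, the algorithm has at most $\frac{1}{\alpha}\mathrm{OPT}_t+O(\log\rho)$ bins open, where $\rho$ is the maximum number of items simultaneously present in the system and the $O(\cdot)$ hides an absolute constant.
   Context: Dynamic bin packing: bins have capacity $1$; items arrive online at times $a_i\ge0$ with size $s_i\in[0,1]$ and (unknown at arrival) duration $d_i>0$, and depart at $a_i+d_i$. The load of a bin is the total size of its items; a bin is open while nonempty. $\mathrm{OPT}_t$ is the minimum number of unit bins needed to pack the items present at time $t$. FirstFit with a given ordering of bins places an item into the first bin in the order with enough remaining capacity, or opens a new bin. Algorithm 1 (parameters $\alpha, f$): each bin is labeled Bad or Good. When an item $i$ of size $s_i$ arrives: if there is a Bad bin with load $\le 1-s_i$, put $i$ there, and if its load becomes $\ge f$ relabel it Good; otherwise, if there is a Good bin with load $\le1-s_i$, put $i$ into any such bin; otherwise open a new bin for $i$, labeled Bad if its load is $<f$ and Good otherwise. When an item departs: if its bin was Good and now has load $<\alpha$, migrate all items remaining in that bin using FirstFit with bins ordered Bad bins, then Good bins, then new bins. Algorithm 2 (parameter $\alpha$): an item has class $c\in\{0,1,2,\dots\}$ if its size lies in $(2^{-(c+1)},2^{-c}]$. Initialize a guess $\tilde\rho=1$, an instance of Algorithm 1 for class $0$ with parameters $(\alpha,\tfrac12)$, and one junk bin. For each arriving item: if the current number of items in the system is $\ge\tilde\rho$, double $\tilde\rho$, initialize a new instance of Algorithm 1 for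 class $c=\log_2\tilde\rho$ with parameters $(\alpha,1-2^{-c})$, and open a new junk bin for this guess. Then, if the item's class $c$ satisfies $c<\log_2\tilde\rho$, assign it using the Algorithm 1 instance for class $c$ (each instance uses its own bins); otherwise assign it to the junk bin of the current guess $\tilde\rho$. *)

From HB Require Import structures.
From mathcomp Require Import all_boot all_order all_algebra.
From mathcomp Require Import all_classical all_reals all_analysis.
Set Implicit Arguments. Unset Strict Implicit. Unset Printing Implicit Defensive.
Import Order.TTheory GRing.Theory Num.Theory.
Local Open Scope ring_scope.

Section DBP.
Variable R : realType.
Variable n : nat.
Variables (a d sz : 'I_n -> R).
Variable alpha : R.

Definition present (t : R) (i : 'I_n) : bool := (a i <= t) && (t < a i + d i).

Definition packb (t : R) (k : nat) : bool :=
  [exists h : {ffun 'I_n -> 'I_k},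
     [forall b : 'I_k, (\sum_(i | present t i && (h i == b)) sz i) <= 1]].
Definition is_OPT (t : R) (k : nat) : Prop :=
  packb t k /\ forall k', packb t k' -> (k <= k')%N.

Definition is_rho (r : nat) : Prop :=
  (exists t, #|[set i | present t i]| = r) /\ (forall t, (#|[set i | present t i]| <= r)%N).

(* Bin identifiers: inl k = junk bin of the guess 2^k;
   inr (c, b) = bin number b of the Algorithm-1 instance for class c. *)
Definition binid := (nat + nat * nat)%type.

(* lab c b = true means bin (c,b) is labeled Good, false means Bad. *)
Record state := State {
  guess : nat;                 (* rho~ = 2 ^ guess *)
  pres : 'I_n -> bool;
  loc : 'I_n -> binid;
  lab : nat -> nat -> bool }.

Definition init_state : state :=
  State 0 (fun _ => false) (fun _ => inl 0%N) (fun _ _ => false).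

Definition is_open (S : state) (B : binid) : bool :=
  [exists i, pres S i && (loc S i == B)].
Definition load (S : state) (B : binid) : R :=
  \sum_(i | pres S i && (loc S i == B)) sz i.
Definition nopen (S : state) : nat :=
  size (undup [seq loc S i | i <- enum 'I_n & pres S i]).
Definition nitems (S : state) : nat := #|[set i | pres S i]|.

Definition put (S : state) (i : 'I_n) (B : binid) : state :=
  State (guess S) (fun j => if j == i then true else pres S j)
        (fun j => if j == i then B else loc S j) (lab S).
Definition remove (S : state) (i : 'I_n) : state :=
  State (guess S) (fun j => if j == i then false else pres S j) (loc S) (lab S).
Definition setlab (S : state) (c b : nat) (v : bool) : state :=
  State (guess S) (pres S) (loc S)
        (fun c' b' => if (c' == c) && (b' == b) then v else lab S c' b').
Definition setguess (S : state) (g : nat) : state :=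
  State g (pres S) (loc S) (lab S).

Definition is_class (x : R) (c : nat) : Prop :=
  (2^-1) ^+ c.+1 < x /\ x <= (2^-1) ^+ c.
Definition fpar (c : nat) : R := if c == 0%N then 2^-1 else 1 - (2^-1) ^+ c.

Definition add_inst (S : state) (i : 'I_n) (c b : nat) (f : R) : state :=
  let S' := put S i (inr (c, b)) in
  if is_open S (inr (c, b)) && lab S c b then S'
  else setlab S' c b (f <= load S' (inr (c, b))).

Definition inst_arrive (S : state) (i : 'I_n) (c : nat) (S' : state) : Prop :=
  let f := fpar c in
  (exists b, [/\ is_open S (inr (c, b)), lab S c b = false,
                 load S (inr (c, b)) <= 1 - sz i & S' = add_inst S i c b f])
  \/ ((forall b, is_open S (inr (c, b)) -> lab S c b = false ->
                 1 - sz i < load S (inr (c, b))) /\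
      ((exists b, [/\ is_open S (inr (c, b)), lab S c b = true,
                      load S (inr (c, b)) <= 1 - sz i & S' = add_inst S i c b f])
       \/ ((forall b, is_open S (inr (c, b)) -> lab S c b = true ->
                      1 - sz i < load S (inr (c, b))) /\
           exists b, ~~ is_open S (inr (c, b)) /\ S' = add_inst S i c b f))).

Definition arrive (S : state) (i : 'I_n) (S' : state) : Prop :=
  ~~ pres S i /\
  let g' := if (2 ^ guess S <= nitems S)%N then (guess S).+1 else guess S in
  let S1 := setguess S g' in
  (exists c, [/\ is_class (sz i) c, (c < g')%N & inst_arrive S1 i c S'])
  \/ ((forall c, is_class (sz i) c -> (g' <= c)%N) /\ S' = put S1 i (inl g')).

(* FirstFit migration of the items js out of bin (c,b); L is the current
   ordering of target bins (initially Bad bins then Good bins, new bins are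
   appended at the end when opened). *)
Inductive migrate (c b : nat) (f : R) : seq nat -> seq 'I_n -> state -> state -> Prop :=
| mig_nil L S : migrate c b f L [::] S S
| mig_fit L j js S S' b' :
    b' \in L -> load S (inr (c, b')) <= 1 - sz j ->
    (forall b'', b'' \in take (index b' L) L -> 1 - sz j < load S (inr (c, b''))) ->
    migrate c b f L js (add_inst S j c b' f) S' ->
    migrate c b f L (j :: js) S S'
| mig_new L j js S S' b' :
    (forall b'', b'' \in L -> 1 - sz j < load S (inr (c, b''))) ->
    ~~ is_open S (inr (c, b')) ->
    migrate c b f (rcons L b') js (add_inst S j c b' f) S' ->
    migrate c b f L (j :: js) S S'.

Definition depart (S : state) (i : 'I_n) (S' : state) : Prop :=
  pres S i /\
  let S1 := remove S i in
  match loc S i with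
  | inr (c, b) =>
      if lab S c b && (load S1 (inr (c, b)) < alpha) then
        exists (L1 L2 : seq nat) (js : seq 'I_n),
          [/\ uniq (L1 ++ L2),
              (forall b', b' \in L1 ++ L2 <-> (b' != b /\ is_open S1 (inr (c, b')))),
              all (fun b' => ~~ lab S1 c b') L1 && all (lab S1 c) L2,
              perm_eq js [seq j <- enum 'I_n | pres S1 j && (loc S1 j == inr (c, b))]
            & migrate c b (fpar c) (L1 ++ L2) js S1 S']
      else S' = S1
  | inl _ => S' = S1
  end.

(* events: (true, i) = arrival of i, (false, i) = departure of i *)
Definition event := (bool * 'I_n)%type.
Definition etime (e : event) : R := if e.1 then a e.2 else a e.2 + d e.2.
Definition step (S : state) (e : event) (S' : state) : Prop :=
  if e.1 then arrive S e.2 S' else depart S e.2 S'.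

Inductive steps : state -> seq event -> state -> Prop :=
| steps_nil S : steps S [::] S
| steps_cons S e es S1 S2 : step S e S1 -> steps S1 es S2 -> steps S (e :: es) S2.

(* a valid processing order of all events: by time, and at equal times
   departures before arrivals *)
Definition evle (e e' : event) : bool :=
  (etime e < etime e') || ((etime e == etime e') && (~~ e.1 || e'.1)).
Definition valid_schedule (sch : seq event) : Prop :=
  perm_eq sch (enum {: bool * 'I_n}) /\ pairwise evle sch.

Definition events_upto (sch : seq event) (t : R) : seq event :=
  take (count (fun e => etime e <= t) sch) sch.

End DBP.

From mathcomp Require Import all_boot all_order all_algebra.
From mathcomp Require Import all_classical all_reals all_analysis.
From mathcomp Require Import lra zify.
Import Order.TTheory GRing.Theory Num.Theory.
Local Open Scope ring_scope.
Set Implicit Arguments. Unset Strict Implicit.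

(* Algorithm 2 preserves [packing_inv]: in every Algorithm-1 instance of
   class c at most one bin is Bad, and every Good bin has load at least alpha.
   A bin turns Good only once its load reaches f >= 1/2 > alpha, and a Good bin
   whose load drops below alpha is emptied by migration.  A second Bad bin is
   never opened, because an open Bad bin fits every item of its class.  Hence
   at any time there are at most log2 rho~ + 1 junk bins, log2 rho~ Bad bins and
   (total size)/alpha <= OPT_t/alpha Good bins; and rho~ is doubled only when
   the number of items present reaches it, so rho~ < 2 rho once rho > 0. *)

Section State.
Variables (R : realType) (n : nat) (sz : 'I_n -> R).
Hypothesis sz_ge0 : forall i, 0 <= sz i.

Lemma is_openP (S : state n) B :
  reflect (exists2 x, pres S x & loc S x = B) (is_open S B).
Proof.
apply: (iffP existsP) => [[x /andP[px /eqP lx]]|[x px lx]]; exists x => //.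
by rewrite px lx eqxx.
Qed.

Lemma load_ge0 S B : 0 <= load sz S B.
Proof. exact: sumr_ge0. Qed.

Lemma size_le_load S B x : pres S x -> loc S x = B -> sz x <= load sz S B.
Proof.
move=> px lx; rewrite /load (bigD1 x) /=; last by rewrite px lx eqxx.
by rewrite lerDl; exact: sumr_ge0.
Qed.

Lemma load_removeD S j B : load sz S B =
  load sz (remove S j) B + (if pres S j && (loc S j == B) then sz j else 0).
Proof.
rewrite /load; case Pj: (pres S j && (loc S j == B)).
- rewrite (bigD1 j) //= addrC; congr (_ + _).
  by apply: eq_bigl => x /=; case: (eqVneq x j); rewrite /= ?andbF ?andbT.
- rewrite addr0; apply: eq_bigl => x /=.
  by case: (eqVneq x j) => [->|]; rewrite ?Pj.
Qed.

Lemma load_remove_le S j B : load sz (remove S j) B <= load sz S B.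
Proof. by rewrite (load_removeD S j B) lerDl; case: ifP. Qed.

Lemma load_put S j B B' : load sz (put S j B) B' =
  load sz (remove S j) B' + (if B == B' then sz j else 0).
Proof.
rewrite (load_removeD _ j) /= eqxx; congr (_ + _).
by rewrite /load; apply: eq_bigl => x /=; case: eqP.
Qed.

Lemma eq_inr_pair (c b c' b' : nat) :
  (inr (c', b') == inr (c, b) :> binid) = (c' == c) && (b' == b).
Proof. by rewrite -xpair_eqE. Qed.

Lemma pres_add_inst S j c b f x :
  pres (add_inst sz S j c b f) x = (x == j) || pres S x.
Proof. by rewrite /add_inst; case: ifP => _ /=; case: eqP. Qed.

Lemma loc_add_inst S j c b f x :
  loc (add_inst sz S j c b f) x = if x == j then inr (c, b) else loc S x.
Proof. by rewrite /add_inst; case: ifP. Qed.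

Lemma pres_add_inst_present S j c b f :
  pres S j -> pres (add_inst sz S j c b f) =1 pres S.
Proof. by move=> pj x; rewrite pres_add_inst; case: eqP => // ->. Qed.

Lemma guess_add_inst S j c b f : guess (add_inst sz S j c b f) = guess S.
Proof. by rewrite /add_inst; case: ifP. Qed.

Lemma load_add_inst S j c b f :
  load sz (add_inst sz S j c b f) =1 load sz (put S j (inr (c, b))).
Proof. by rewrite /load /add_inst; case: ifP. Qed.

Lemma lab_add_inst S j c b f c' b' : lab (add_inst sz S j c b f) c' b' =
  if (c' == c) && (b' == b) then
    (is_open S (inr (c, b)) && lab S c b) ||
    (f <= load sz (put S j (inr (c, b))) (inr (c, b)))
  else lab S c' b'.
Proof.
rewrite /add_inst; case: ifP => good /=; case: ifP => // /andP[/eqP-> /eqP->].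
by case/andP: good.
Qed.

Lemma is_open_add_inst_target S j c b f : is_open (add_inst sz S j c b f) (inr (c, b)).
Proof. by apply/is_openP; exists j; rewrite ?pres_add_inst ?loc_add_inst eqxx. Qed.

Lemma is_open_add_inst S j c b f B :
  B != inr (c, b) -> is_open (add_inst sz S j c b f) B -> is_open S B.
Proof.
move=> nB /is_openP[x]; rewrite pres_add_inst loc_add_inst.
case: eqP => [_ _ eB|_ /= px lx]; first by rewrite eB eqxx in nB.
by apply/is_openP; exists x.
Qed.

Lemma is_open_add_instW S j c b f B :
  B != loc S j -> is_open S B -> is_open (add_inst sz S j c b f) B.
Proof.
move=> nB /is_openP[x px lx]; apply/is_openP; exists x.
  by rewrite pres_add_inst px orbT.
by rewrite loc_add_inst; case: eqP => // ex; rewrite -lx ex eqxx in nB.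
Qed.

End State.

Section Invariant.
Variables (R : realType) (n : nat) (sz : 'I_n -> R) (alpha : R).
Hypothesis sz_ge0 : forall i, 0 <= sz i.
Hypothesis alpha_lt_half : alpha < 2^-1.

Lemma half_le_fpar c : 2^-1 <= fpar R c.
Proof.
case: c => [|c] //=; rewrite /fpar /=.
have : (2^-1 : R) ^+ c.+1 <= 2^-1.
  by rewrite exprS ler_piMr // exprn_ile1 ?invr_ge0 ?invf_le1 ?ler1n.
lra.
Qed.

Lemma fpar_le_compl s c : is_class s c -> (0 < c)%N -> fpar R c <= 1 - s.
Proof. by case: c => [|c] [_ s_le] //= _; rewrite /fpar /= lerB. Qed.

(* [exempt] holds for the Good bin being emptied by a migration, the only
   Good bin whose load may be below [alpha]. *)
Record packing_inv (S : state n) (exempt : pred (nat * nat)) : Prop := PackingInv {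
  junk_le_guess : forall j g, pres S j -> loc S j = inl g -> (g <= guess S)%N;
  class_lt_guess : forall j c b, pres S j -> loc S j = inr (c, b) ->
    is_class (sz j) c /\ (c < guess S)%N;
  bad_load_lt : forall c b, is_open S (inr (c, b)) -> lab S c b = false ->
    load sz S (inr (c, b)) < fpar R c;
  bad_bin_unique : forall c b b', is_open S (inr (c, b)) -> lab S c b = false ->
    is_open S (inr (c, b')) -> lab S c b' = false -> b = b';
  good_load_ge : forall c b, is_open S (inr (c, b)) -> lab S c b ->
    exempt (c, b) \/ alpha <= load sz S (inr (c, b)) }.

Definition all_good (S : state n) c := forall b, is_open S (inr (c, b)) -> lab S c b.

(* For c = 0 there is no open Bad bin: its load would be below 1/2 while it
   holds an item larger than 1/2. *)
Lemma bad_bin_fits S X c b s : packing_inv S X ->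
  is_open S (inr (c, b)) -> lab S c b = false -> is_class s c ->
  load sz S (inr (c, b)) <= 1 - s.
Proof.
case=> _ Hclass Hbad _ _ ob lb cs; have lt_f := Hbad _ _ ob lb.
case: c ob lb cs lt_f => [|c] ob lb cs lt_f; last first.
  exact: le_trans (ltW lt_f) (fpar_le_compl cs _).
case/is_openP: ob => x px lx; have [[half_lt _] _] := Hclass _ _ _ px lx.
have := size_le_load sz_ge0 px lx; rewrite /fpar /= expr1 in lt_f half_lt.
lra.
Qed.

Lemma all_good_of_no_fit S X c s : packing_inv S X -> is_class s c ->
  (forall b, is_open S (inr (c, b)) -> lab S c b = false ->
     1 - s < load sz S (inr (c, b))) ->
  all_good S c.
Proof.
move=> inv cs no_fit b ob; case lb: (lab S c b) => //.
by have := bad_bin_fits inv ob lb cs; rewrite leNgt no_fit.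
Qed.

Section AddItem.
Variables (S : state n) (X : pred (nat * nat)) (j : 'I_n) (c b : nat).
Hypothesis invS : packing_inv S X.
Hypothesis class_j : is_class (sz j) c.
Hypothesis c_lt_guess : (c < guess S)%N.
Hypothesis moved_from_exempt :
  pres S j -> exists2 b0, loc S j = inr (c, b0) & (b0 != b) && X (c, b0).
Hypothesis target_open_or_all_good : is_open S (inr (c, b)) \/ all_good S c.

Local Notation S' := (add_inst sz S j c b (fpar R c)).

Lemma not_in_target : pres S j -> loc S j != inr (c, b).
Proof.
by move=> pj; case: (moved_from_exempt pj) => b0 -> /andP[nb _]; rewrite eq_inr_pair eqxx.
Qed.

Lemma load_add_inst_target :
  load sz S' (inr (c, b)) = load sz S (inr (c, b)) + sz j.
Proof.
rewrite load_add_inst load_put eqxx [in RHS](load_removeD _ _ j).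
case: ifP => [/andP[pj]|_]; last by rewrite addr0.
by rewrite (negbTE (not_in_target pj)).
Qed.

Lemma load_add_inst_other B : B != inr (c, b) -> load sz S' B <= load sz S B.
Proof.
move=> nB; rewrite load_add_inst load_put eq_sym (negbTE nB) addr0.
exact: load_remove_le.
Qed.

Lemma load_add_inst_untouched B : B != inr (c, b) ->
  (pres S j -> loc S j != B) -> load sz S' B = load sz S B.
Proof.
move=> nB nj; rewrite load_add_inst load_put eq_sym (negbTE nB) addr0.
rewrite [RHS](load_removeD _ _ j B).
case: ifP => [/andP[pj]|_]; last by rewrite /= addr0.
by rewrite (negbTE (nj pj)).
Qed.

Lemma lab_add_inst_target :
  lab S' c b = (is_open S (inr (c, b)) && lab S c b) ||
               (fpar R c <= load sz S' (inr (c, b))).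
Proof. by rewrite lab_add_inst !eqxx load_add_inst. Qed.

Lemma lab_add_inst_other c' b' :
  inr (c', b') != inr (c, b) :> binid -> lab S' c' b' = lab S c' b'.
Proof. by rewrite lab_add_inst eq_inr_pair => /negbTE->. Qed.

Lemma bad_add_inst c' b' : is_open S' (inr (c', b')) -> lab S' c' b' = false ->
  (is_open S (inr (c', b')) /\ lab S c' b' = false) \/
  [/\ c' = c, b' = b & ~~ is_open S (inr (c, b))].
Proof.
case: (eqVneq (inr (c', b') : binid) (inr (c, b))) => [[-> ->]|ne] o' l'.
  case ob: (is_open S (inr (c, b))); [left | by right].
  by move: l'; rewrite lab_add_inst_target ob => /norP[/negbTE].
by left; rewrite -lab_add_inst_other //; split=> //; exact: is_open_add_inst o'.
Qed.

Lemma packing_inv_add_inst : packing_inv S' X.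
Proof.
case: invS => Hjunk Hclass Hbad Huniq Hgood; split.
- move=> x g; rewrite pres_add_inst loc_add_inst guess_add_inst.
  by case: eqP => // _ /= px lx; exact: Hjunk px lx.
- move=> x c' b'; rewrite pres_add_inst loc_add_inst guess_add_inst.
  case: eqP => [-> _ [<- _] //|_ /= px lx]; exact: Hclass px lx.
- move=> c' b'.
  case: (eqVneq (inr (c', b') : binid) (inr (c, b))) => [[-> ->]|ne] o' l'.
    by move: l'; rewrite lab_add_inst_target => /norP[_]; rewrite ltNge => ->.
  rewrite lab_add_inst_other // in l'.
  exact: le_lt_trans (load_add_inst_other ne) (Hbad _ _ (is_open_add_inst ne o') l').
- move=> c' b1 b2 o1 l1 o2 l2.
  case: (bad_add_inst o1 l1) => [[p1 q1]|[e1 e2 n1]];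
    case: (bad_add_inst o2 l2) => [[p2 q2]|[e3 e4 n2]]; subst.
  + exact: Huniq p1 q1 p2 q2.
  + by case: target_open_or_all_good => [ob|nb]; [rewrite ob in n2 | rewrite nb in q1].
  + by case: target_open_or_all_good => [ob|nb]; [rewrite ob in n1 | rewrite nb in q2].
  + by [].
- move=> c' b'.
  case: (eqVneq (inr (c', b') : binid) (inr (c, b))) => [[-> ->]|ne] o' l'.
    move: l'; rewrite lab_add_inst_target => /orP[/andP[ob lb]|f_le].
      case: (Hgood _ _ ob lb) => [|al]; [by left | right].
      by rewrite load_add_inst_target (le_trans al) ?lerDl.
    by right; rewrite (le_trans (ltW alpha_lt_half)) ?(le_trans (half_le_fpar c)).
  rewrite lab_add_inst_other // in l'.
  case: (Hgood _ _ (is_open_add_inst ne o') l') => [|al]; first by left.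
  case pj: (pres S j); last by right; rewrite load_add_inst_untouched // pj.
  case: (moved_from_exempt pj) => b0 lj /andP[_ Xb0].
  case: (eqVneq (inr (c', b') : binid) (inr (c, b0))) => [[-> ->]|ne0]; first by left.
  by right; rewrite load_add_inst_untouched // => _; rewrite lj eq_sym.
Qed.

End AddItem.

Lemma packing_inv_weaken S X (Y : pred (nat * nat)) : packing_inv S X ->
  (forall c b, is_open S (inr (c, b)) -> lab S c b -> X (c, b) ->
     Y (c, b) \/ alpha <= load sz S (inr (c, b))) ->
  packing_inv S Y.
Proof.
case=> Hjunk Hclass Hbad Huniq Hgood H; split => // c b o l.
by case: (Hgood _ _ o l) => [/(H _ _ o l)|]; [|right].
Qed.

Lemma packing_inv_remove S X i :
  packing_inv S X -> packing_inv (remove S i) (fun cb => X cb || (loc S i == inr cb)).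
Proof.
case=> Hjunk Hclass Hbad Huniq Hgood.
have pres_rem x : pres (remove S i) x -> pres S x by rewrite /=; case: (x == i).
have open_rem B : is_open (remove S i) B -> is_open S B.
  by case/is_openP => x /pres_rem px lx; apply/is_openP; exists x.
split=> //=.
- by move=> x g /pres_rem; exact: Hjunk.
- by move=> x c b /pres_rem; exact: Hclass.
- move=> c b /open_rem o l.
  exact: le_lt_trans (load_remove_le sz_ge0 _ _ _) (Hbad _ _ o l).
- by move=> c b b' /open_rem o1 l1 /open_rem o2 l2; exact: Huniq o1 l1 o2 l2.
- move=> c b /open_rem o l; case: (Hgood _ _ o l) => [->|al]; first by left.
  case: (eqVneq (loc S i) (inr (c, b))) => [e|ne]; first by left; rewrite orbT.
  by right; move: al; rewrite (load_removeD _ _ i) (negbTE ne) andbF addr0.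
Qed.

Lemma packing_inv_setguess S X g :
  packing_inv S X -> (guess S <= g)%N -> packing_inv (setguess S g) X.
Proof.
case=> Hjunk Hclass Hbad Huniq Hgood le_g; split => //= x.
- by move=> g0 px lx; exact: leq_trans (Hjunk _ _ px lx) le_g.
- move=> c b px lx; have [cx lt_c] := Hclass _ _ _ px lx.
  by split; last exact: leq_trans le_g.
Qed.

Lemma packing_inv_put_junk S X i g : packing_inv S X -> ~~ pres S i ->
  (g <= guess S)%N -> packing_inv (put S i (inl g)) X.
Proof.
case=> Hjunk Hclass Hbad Huniq Hgood npi le_g.
have open_put c b : is_open (put S i (inl g)) (inr (c, b)) = is_open S (inr (c, b)).
  apply/is_openP/is_openP => [[x]|[x px lx]] /=.
    by case: eqP => // _ px lx; exists x.
  by exists x; case: eqP => // ex; rewrite -ex px in npi.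
have load_put_junk c b : load sz (put S i (inl g)) (inr (c, b)) = load sz S (inr (c, b)).
  by rewrite load_put [RHS](load_removeD _ _ i) (negbTE npi).
split => /=.
- by move=> x g0; case: eqP => [_ _ [<-]|_]; [| exact: Hjunk].
- by move=> x c b; case: eqP => [//|_]; exact: Hclass.
- by move=> c b; rewrite open_put load_put_junk; exact: Hbad.
- by move=> c b b'; rewrite !open_put; exact: Huniq.
- by move=> c b; rewrite open_put load_put_junk; exact: Hgood.
Qed.

Record migration_inv c b0 (L : seq nat) (js : seq 'I_n) (T : state n) : Prop :=
  MigrationInv {
  mig_packing_inv : packing_inv T (xpred1 (c, b0));
  mig_source_good : lab T c b0;
  mig_source_notin : b0 \notin L;
  mig_targets_open : forall b, b \in L -> is_open T (inr (c, b));
  mig_targets_all : forall b, b != b0 -> is_open T (inr (c, b)) -> b \in L;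
  mig_uniq : uniq js;
  mig_items : forall j, (j \in js) = pres T j && (loc T j == inr (c, b0)) }.

Lemma migration_inv_head c b0 L j js T : migration_inv c b0 L (j :: js) T ->
  [/\ pres T j, loc T j = inr (c, b0) & is_class (sz j) c].
Proof.
move=> mig; have /andP[pj /eqP lj] := etrans (esym (mig_items mig j)) (mem_head j js).
by have [cj _] := class_lt_guess (mig_packing_inv mig) pj lj.
Qed.

Lemma migration_inv_step c b0 L L' j js T b :
  migration_inv c b0 L (j :: js) T -> b != b0 ->
  is_open T (inr (c, b)) \/ all_good T c ->
  (forall b', (b' \in L') = (b' \in L) || (b' == b)) ->
  migration_inv c b0 L' js (add_inst sz T j c b (fpar R c)).
Proof.
move=> mig nb target memL'; have [pj lj cj] := migration_inv_head mig.
case: mig => inv lb0 b0L Lopen Lall /andP[j_notin ujs] items.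
have [_ lt_c] := class_lt_guess inv pj lj.
have ne_b0 b' : b' \in L -> inr (c, b') != loc T j.
  by move=> bL; rewrite lj eq_inr_pair eqxx; apply: contraNneq b0L => <-.
split=> //.
- apply: packing_inv_add_inst => // _; exists b0 => //.
  by rewrite eq_sym nb /= eqxx.
- by rewrite lab_add_inst_other // eq_inr_pair eqxx eq_sym.
- by rewrite memL' negb_or b0L eq_sym.
- move=> b'; rewrite memL' => /orP[bL|/eqP->]; last exact: is_open_add_inst_target.
  exact/is_open_add_instW/Lopen/bL/ne_b0.
- move=> b' nb' o; rewrite memL'; case: (eqVneq b' b) => [_|ne]; first by rewrite orbT.
  by rewrite orbF; apply: Lall nb' (is_open_add_inst _ o); rewrite eq_inr_pair eqxx.
- move=> x; rewrite pres_add_inst loc_add_inst.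
  case: (eqVneq x j) => [->|nx] /=; last by rewrite -items in_cons (negbTE nx).
  by rewrite (negbTE j_notin) eq_inr_pair eqxx (negbTE nb).
Qed.

Lemma migrate_packing_inv c b0 L js T T' :
  migrate sz c b0 (fpar R c) L js T T' -> migration_inv c b0 L js T ->
  [/\ packing_inv T' xpred0, pres T' =1 pres T & guess T' = guess T].
Proof.
elim=> {L js T T'} [L T|L j js T T' b bL _ _ _ IH|L j js T T' b full nb _ IH] mig.
- split=> //; apply: (packing_inv_weaken (mig_packing_inv mig)) => c' b' o _ /eqP[e1 e2].
  subst c' b'; case/is_openP: o => x px lx; move: (mig_items mig x).
  by rewrite px lx eqxx.
- have [pj _ _] := migration_inv_head mig.
  have nb : b != b0 by apply: contraNneq (mig_source_notin mig) => <-.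
  have memL b' : (b' \in L) = (b' \in L) || (b' == b).
    by case: eqP => [->|]; rewrite ?bL ?orbF.
  have [inv' pres' guess'] :=
    IH (migration_inv_step mig nb (or_introl (mig_targets_open mig bL)) memL).
  split=> // [x|]; first by rewrite pres' pres_add_inst_present.
  by rewrite guess' guess_add_inst.
- have [pj lj cj] := migration_inv_head mig.
  have nb0 : b != b0 by apply: contraNneq nb => ->; apply/is_openP; exists j.
  have good : all_good T c.
    apply: (all_good_of_no_fit (mig_packing_inv mig) cj) => b' o l; apply: full.
    apply: (mig_targets_all mig) o.
    by apply: contraTneq (mig_source_good mig) => <-; rewrite l.
  have memL b' : (b' \in rcons L b) = (b' \in L) || (b' == b).
    by rewrite mem_rcons in_cons orbC.
  have [inv' pres' guess'] :=
    IH (migration_inv_step mig nb0 (or_intror good) memL).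
  split=> // [x|]; first by rewrite pres' pres_add_inst_present.
  by rewrite guess' guess_add_inst.
Qed.

Lemma depart_packing_inv S i S' : packing_inv S xpred0 -> depart sz alpha S i S' ->
  [/\ packing_inv S' xpred0, pres S' =1 (fun j => (j != i) && pres S j)
    & guess S' = guess S].
Proof.
move=> inv [pi]; have inv_rem := packing_inv_remove i inv.
have pres_rem j : pres (remove S i) j = (j != i) && pres S j by rewrite /=; case: eqP.
case li: (loc S i) => [g|[c b]] /=.
  move=> ->; split => //; apply: (packing_inv_weaken inv_rem) => c b _ _.
  by rewrite li.
case: ifP => [/andP[lb _] [L1 [L2 [js [uL memL labs perm_js mig]]]]|keep ->]; last first.
  split=> //; apply: (packing_inv_weaken inv_rem) => c' b' _ l'.
  rewrite li eq_inr_pair => /andP[/eqP e1 /eqP e2]; subst c' b'; right.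
  by move: keep; rewrite l' /= => /negbT; rewrite -leNgt.
have [inv' pres' guess'] : [/\ packing_inv S' xpred0, pres S' =1 pres (remove S i)
    & guess S' = guess (remove S i)].
  apply: (migrate_packing_inv mig); split => //.
  - apply: (packing_inv_weaken inv_rem) => c' b' _ _; rewrite li eq_inr_pair.
    by move=> /andP[/eqP-> /eqP->]; left.
  - by apply/negP => /memL[/eqP].
  - by move=> b' /memL[].
  - by move=> b' nb' o; apply/memL.
  - by rewrite (perm_uniq perm_js) filter_uniq ?enum_uniq.
  - by move=> j; rewrite (perm_mem perm_js) mem_filter mem_enum andbT.
by split=> // j; rewrite pres' pres_rem.
Qed.

Definition next_guess (S : state n) :=
  if (2 ^ guess S <= nitems S)%N then (guess S).+1 else guess S.

Lemma arrive_packing_inv S i S' : packing_inv S xpred0 -> arrive sz S i S' ->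
  [/\ packing_inv S' xpred0, pres S' =1 (fun j => (j == i) || pres S j)
    & guess S' = next_guess S].
Proof.
move=> inv [npi]; rewrite -/(next_guess S); set S1 := setguess S (next_guess S).
have inv1 : packing_inv S1 xpred0.
  by apply: packing_inv_setguess inv _; rewrite /next_guess; case: ifP.
case=> [[c [cc lt_c arr]]|[_ ->]]; last first.
  split=> //; first exact: packing_inv_put_junk inv1 npi _.
suff add_ok b : is_open S1 (inr (c, b)) \/ all_good S1 c ->
    S' = add_inst sz S1 i c b (fpar R c) ->
    [/\ packing_inv S' xpred0, pres S' =1 (fun j => (j == i) || pres S j)
      & guess S' = next_guess S].
  case: arr => [[b [ob _ _ eS]]|[no_fit [[b [ob _ _ eS]]|[_ [b [_ eS]]]]]];
    move: eS; apply: add_ok.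
  + by left.
  + by left.
  + by right; apply: all_good_of_no_fit inv1 cc no_fit.
move=> target ->; split; last by rewrite guess_add_inst.
  by apply: packing_inv_add_inst => // pi; rewrite pi in npi.
by move=> j; rewrite pres_add_inst.
Qed.

End Invariant.

Lemma sum_load_uniq (R : realType) n (sz : 'I_n -> R) S (U : seq binid) : uniq U ->
  \sum_(B <- U) load sz S B = \sum_(i | pres S i && (loc S i \in U)) sz i.
Proof.
elim: U => [_|B U IH /= /andP[nB uU]].
  by rewrite big_nil big_pred0 // => i; rewrite andbF.
rewrite big_cons IH // /load [in LHS]big_mkcond [X in _ + X]big_mkcond.
rewrite [RHS]big_mkcond -big_split /=; apply: eq_bigr => i _.
rewrite in_cons; case: (pres S i) => /=; last by rewrite addr0.
by case: eqP => [->|_]; rewrite ?(negbTE nB) ?addr0 ?add0r.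
Qed.

Section Counting.
Variables (R : realType) (n : nat) (sz : 'I_n -> R) (alpha : R).
Hypothesis sz_ge0 : forall i, 0 <= sz i.
Variable S : state n.
Hypothesis invS : packing_inv sz alpha S xpred0.

Local Notation open_bins := (undup [seq loc S i | i <- enum 'I_n & pres S i]).

Lemma mem_open_bins B : (B \in open_bins) = is_open S B.
Proof.
rewrite mem_undup; apply/mapP/is_openP => [[i]|[i pi li]].
  by rewrite mem_filter => /andP[pi _] ->; exists i.
by exists i; rewrite // mem_filter pi mem_enum.
Qed.

Definition is_junk (B : binid) := if B is inl _ then true else false.
Definition is_bad (B : binid) := if B is inr (c, b) then ~~ lab S c b else false.
Definition is_good (B : binid) := if B is inr (c, b) then lab S c b else false.

Lemma size_bins_split (s : seq binid) :
  size s = (count is_junk s + count is_bad s + count is_good s)%N.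
Proof. by elim: s => //= -[g|[c b]] s ->; last case: (lab S c b); simpl; lia. Qed.

Lemma junk_bins_le : (count is_junk open_bins <= (guess S).+1)%N.
Proof.
rewrite -size_filter -(size_iota 0 (guess S).+1) -(size_map (@inl nat (nat * nat))).
apply: uniq_leq_size; first by rewrite filter_uniq ?undup_uniq.
move=> B; rewrite mem_filter mem_open_bins; case: B => [g /andP[_ /is_openP[i pi li]]|//].
by apply/mapP; exists g; rewrite // mem_iota add0n ltnS (junk_le_guess invS pi li).
Qed.

Lemma bad_bins_le : (count is_bad open_bins <= guess S)%N.
Proof.
pose class_of (B : binid) := if B is inr (c, _) then c else 0%N.
have bad_bin B : B \in [seq B <- open_bins | is_bad B] ->
    exists c b, [/\ B = inr (c, b), is_open S (inr (c, b)) & lab S c b = false].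
  rewrite mem_filter mem_open_bins; case: B => [//|[c b] /= /andP[lb ob]].
  by exists c, b; split=> //; apply: negbTE.
rewrite -size_filter -(size_map class_of) -(size_iota 0 (guess S)).
apply: uniq_leq_size.
  rewrite map_inj_in_uniq ?filter_uniq ?undup_uniq //.
  move=> B1 B2 /bad_bin[c1 [b1 [-> o1 l1]]] /bad_bin[c2 [b2 [-> o2 l2]]] /= e.
  by subst c2; rewrite (bad_bin_unique invS o1 l1 o2 l2).
move=> _ /mapP[B /bad_bin[c [b [-> ob _]]] ->]; rewrite mem_iota /=.
by case/is_openP: ob => i pi li; case: (class_lt_guess invS pi li).
Qed.

Lemma good_bins_le :
  alpha * (count is_good open_bins)%:R <= \sum_(i | pres S i) sz i.
Proof.
have -> : \sum_(i | pres S i) sz i = \sum_(B <- open_bins) load sz S B.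
  rewrite sum_load_uniq ?undup_uniq //; apply: eq_bigl => i.
  by rewrite andb_idr // => pi; rewrite mem_open_bins; apply/is_openP; exists i.
rewrite mulr_natr -iter_addr_0 -big_const_seq big_mkcond big_seq [leRHS]big_seq.
apply: ler_sum => B; rewrite mem_open_bins; case: B => [g|[c b]] ob /=.
  exact: load_ge0.
case: ifP => lb; last exact: load_ge0.
by case: (good_load_ge invS ob lb).
Qed.

Lemma nopen_le : 0 < alpha ->
  (nopen S)%:R <= (\sum_(i | pres S i) sz i) / alpha + (2 * guess S + 1)%:R.
Proof.
move=> alpha_gt0; rewrite /nopen size_bins_split natrD addrC.
apply: lerD; first by rewrite ler_pdivlMr // mulrC good_bins_le.
by rewrite ler_nat; have := junk_bins_le; have := bad_bins_le; lia.
Qed.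

End Counting.

Definition guess_bounded (rho g : nat) := (g == 0)%N || (2 ^ g.-1 < rho)%N.

Lemma guess_bounded_next n rho (S : state n) :
  (nitems S < rho)%N -> guess_bounded rho (guess S) ->
  guess_bounded rho (next_guess S).
Proof.
rewrite /next_guess => lt_rho ?; case: ifP => // le_items.
by rewrite /guess_bounded /= (leq_ltn_trans le_items lt_rho).
Qed.

Section Schedule.
Variables (R : realType) (n : nat) (a d sz : 'I_n -> R) (alpha : R).
Hypothesis sz_ge0 : forall i, 0 <= sz i.
Hypothesis alpha_lt_half : alpha < 2^-1.
Hypothesis d_gt0 : forall i, 0 < d i.
Variable sch : seq (event n).
Hypothesis sch_valid : valid_schedule a d sch.
Variable rho : nat.
Hypothesis rho_max : is_rho a d rho.

Record run_inv (S : state n) (p : seq (event n)) : Prop := RunInv {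
  run_packing_inv : packing_inv sz alpha S xpred0;
  run_pres : forall j, pres S j = ((true, j) \in p) && ((false, j) \notin p);
  run_guess : guess_bounded rho (guess S) }.

Lemma evle_etime e e' : evle a d e e' -> etime a d e <= etime a d e'.
Proof. by case/orP => [/ltW|/andP[/eqP-> _]]. Qed.

Lemma mem_sch e : e \in sch.
Proof. by case: sch_valid => /perm_mem-> _; rewrite mem_enum. Qed.

Lemma evle_before p e r x : sch = p ++ e :: r -> x \in p -> evle a d x e.
Proof.
case: sch_valid => _ + sch_eq; rewrite sch_eq pairwise_cat /= => /and3P[before _ _].
by move=> xp; apply: (allrelP before) xp (mem_head _ _).
Qed.

Lemma evle_after p e r x : sch = p ++ e :: r -> x \notin p -> x != e -> evle a d e x.
Proof.
case: sch_valid => _ + sch_eq; rewrite sch_eq pairwise_cat /= => /and3P[_ _ /andP[after _]].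
move=> xp xe; have := mem_sch x; rewrite sch_eq mem_cat in_cons (negbTE xp) (negbTE xe).
exact: (allP after).
Qed.

Lemma nitems_lt_rho S p i r : run_inv S p -> sch = p ++ (true, i) :: r ->
  ~~ pres S i -> (nitems S < rho)%N.
Proof.
move=> [_ presS _] sch_eq npi.
have sub : [set x | pres S x] \proper [set x | present a d (a i) x].
  apply/fintype.properP; split.
    apply/fintype.subsetP => x; rewrite !inE presS => /andP[tx fx].
    apply/andP; split; first exact: evle_etime (evle_before sch_eq tx).
    by have := evle_after sch_eq fx isT; rewrite /evle /= andbF orbF.
  by exists i; rewrite !inE ?(negbTE npi) // /present lexx ltrDl d_gt0.
by apply: leq_trans (proper_card sub) _; case: rho_max.
Qed.

Lemma run_inv_step S p b i r S' : run_inv S p -> step sz alpha S (b, i) S' ->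
  sch = p ++ (b, i) :: r -> run_inv S' (rcons p (b, i)).
Proof.
move=> inv st sch_eq; case: (inv) => invS presS guessS.
case: b st sch_eq => /= st sch_eq.
- have [npi _] := st.
  have [invS' presS' eg] := arrive_packing_inv sz_ge0 alpha_lt_half invS st.
  split=> //; last by rewrite eg; exact: guess_bounded_next (nitems_lt_rho inv sch_eq npi) guessS.
  move=> j; rewrite presS' presS !mem_rcons !in_cons !xpair_eqE /=.
  case: (eqVneq j i) => [->|_] //=.
  apply/esym/negP => /(evle_before sch_eq)/evle_etime; rewrite /etime /=.
  by have := d_gt0 i; lra.
- have [invS' presS' eg] := depart_packing_inv sz_ge0 alpha_lt_half invS st.
  split=> [//||]; last by rewrite eg.
  move=> j; rewrite presS' presS !mem_rcons !in_cons !xpair_eqE /=.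
  by case: (eqVneq j i) => [->|] //=; rewrite andbF.
Qed.

Lemma run_inv_steps S q S' : steps sz alpha S q S' ->
  forall p, run_inv S p -> (exists r, sch = p ++ q ++ r) -> run_inv S' (p ++ q).
Proof.
elim=> [T|T [b i] es T1 T2 st _ IH] p inv [r sch_eq]; first by rewrite cats0.
rewrite -cat_rcons; apply: IH (run_inv_step inv st sch_eq) _.
by exists r; rewrite cat_rcons.
Qed.

Lemma run_inv_init : run_inv (init_state n) [::].
Proof.
have no_open B : is_open (init_state n) B = false by apply/is_openP => -[].
by split=> //; split=> //= c b; rewrite no_open.
Qed.

Lemma run_inv_events_upto t S : steps sz alpha (init_state n) (events_upto a d sch t) S ->
  run_inv S (events_upto a d sch t).
Proof.
move=> run; apply: (run_inv_steps run run_inv_init).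
by exists (drop (count (fun e => etime a d e <= t) sch) sch); rewrite cat_take_drop.
Qed.

Lemma events_upto_filter t : events_upto a d sch t = [seq e <- sch | etime a d e <= t].
Proof.
rewrite /events_upto; case: sch_valid => _; elim: sch => //= e s IH /andP[after pw].
case: ifP => le_t; first by rewrite add1n /= IH.
have gt_t : {in s, (fun e' => etime a d e' <= t) =1 pred0}.
  move=> x xs /=; apply: contraFF le_t => /(le_trans _); apply.
  exact: evle_etime (allP after x xs).
by rewrite (eq_in_count gt_t) count_pred0 (eq_in_filter gt_t) filter_pred0.
Qed.

Lemma pres_events_upto S t : run_inv S (events_upto a d sch t) ->
  pres S =1 present a d t.
Proof.
case=> _ presS _ j; rewrite presS events_upto_filter !mem_filter !mem_sch.
by rewrite !andbT -ltNge.
Qed.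

End Schedule.

Lemma packb_sum_le (R : realType) n (a d sz : 'I_n -> R) t k :
  packb a d sz t k -> \sum_(i | present a d t i) sz i <= k%:R.
Proof.
case/existsP=> h /forallP fits; rewrite (partition_big h predT) //=.
by apply: le_trans (ler_sum _ (fun b _ => fits b)) _; rewrite sumr_const card_ord.
Qed.

Lemma half_le_ln2 (R : realType) : 2^-1 <= ln (2 : R).
Proof.
have := expR_ge1Dx (- ln (2 : R)); rewrite expRN lnK ?posrE //.
lra.
Qed.

Lemma guess_bounded_ln (R : realType) rho g : guess_bounded rho g ->
  (2 * g + 1)%:R <= 4%:R * ln (rho%:R : R) + 4%:R.
Proof.
have ln_ge0 : 0 <= ln (rho%:R : R).
  by case: rho => [|r]; [rewrite ln0 | apply: ln_ge0; rewrite ler1n].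
case: g => [_|g /= lt_rho]; first by rewrite /=; lra.
have pow_gt0 : (0 : R) < (2 ^ g)%:R by rewrite ltr0n expn_gt0.
have pow_le : ((2 ^ g)%:R : R) <= rho%:R by rewrite ler_nat ltnW.
have : ln ((2 ^ g)%:R : R) <= ln (rho%:R : R).
  by rewrite ler_ln ?posrE // (lt_le_trans pow_gt0).
rewrite natrX lnXn // -mulr_natr mul1r => ln_le.
have : g%:R * 2^-1 <= ln 2 * g%:R :> R.
  by rewrite mulrC ler_wpM2r ?half_le_ln2.
have -> : (2 * g.+1 + 1)%:R = 2 * g%:R + 3 :> R by rewrite natrD natrM -addn1 natrD; lra.
lra.
Qed.

Theorem lemma11 :
  exists C : nat,
  forall (R : realType) (alpha : R), 0 < alpha -> alpha < 2^-1 ->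
  forall (n : nat) (a d sz : 'I_n -> R),
    (forall i, 0 <= a i) -> (forall i, 0 <= sz i <= 1) -> (forall i, 0 < d i) ->
  forall sch : seq (event n), valid_schedule a d sch ->
  forall rho : nat, is_rho a d rho ->
  forall (t : R) (k : nat), is_OPT a d sz t k ->
  forall S : state n, steps sz alpha (init_state n) (events_upto a d sch t) S ->
    (nopen S)%:R <= k%:R / alpha + C%:R * ln (rho%:R) + C%:R.
Proof.
exists 4%N => R alpha alpha_gt0 alpha_lt n a d sz _ sz01 d_gt0 sch sch_valid rho rho_max
  t k [packed _] S run.
have sz_ge0 i : 0 <= sz i by case/andP: (sz01 i).
have inv := run_inv_events_upto sz_ge0 alpha_lt d_gt0 sch_valid rho_max run.
have total_le : \sum_(i | pres S i) sz i <= k%:R.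
  by rewrite (eq_bigl _ _ (pres_events_upto sch_valid inv)); exact: packb_sum_le.
have := nopen_le sz_ge0 (run_packing_inv inv) alpha_gt0.
have := guess_bounded_ln R (run_guess inv).
have : (\sum_(i | pres S i) sz i) / alpha <= k%:R / alpha by rewrite ler_pM2r ?invr_gt0.
lra.
Qed.
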